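(* Let $X$ be a real Banach space, $K\subset X$ compact, $\lambda_1,\dots,\lambda_m\in X^*$ with $\|\lambda_j\|_{X^*}=1$, $f\in K$, $w:=\lambda(f)$, and assume $R(K_w)_X\neq0$. Define on $X$ the loss $$\mathcal{L}_K(g):=\|\lambda(g)-w\|+\operatorname{dist}(g,K)_X .$$ Let $C>2$ and let $\delta>0$ satisfy $$2\delta+2R(K(w,4\delta))_X\le C\,R(K_w)_X$$ (which holds for all sufficiently small $\delta>0$). Let $\Sigma\subset X$ satisfy $\operatorname{dist}(K,\Sigma)_X<\delta$ and let $\hat f\in\mathop{\rm argmin}_{g\in\Sigma}\mathcal{L}_K(g)$ be any minimizer. Then $\|f-\hat f\|_X\le C\,R(K_w)_X$.
   Context: For $g\in X$, $\lambda(g):=(\lambda_1(g),\dots,\lambda_m(g))$; on $\mathbb{R}^m$, $\|v\|:=\big[\frac1m\sum_{j=1}^m|v_j|^2\big]^{1/2}$. $\operatorname{dist}(g,K)_X:=\inf_{h\in K}\|g-h\|_X$; for $A,B\subset X$, $\operatorname{dist}(A,B)_X:=\sup_{a\in A}\inf_{b\in B}\|a-b\|_X$. $K_w:=\{h\in K:\lambda(h)=w\}$, $K(w,\varepsilon):=\bigcup_{w'\in\mathbb{R}^m,\ \|w'-w\|\le\varepsilon}K_{w'}$. For $S\subset X$, $R(S)_X:=\inf\{r:\ S\subset B(z,r)_X\text{ for some }z\in X\}$ (Chebyshev radius). *)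

From HB Require Import structures.
From mathcomp Require Import all_boot all_order all_algebra.
From mathcomp Require Import all_classical all_reals all_analysis.
Set Implicit Arguments. Unset Strict Implicit. Unset Printing Implicit Defensive.
Import Order.TTheory GRing.Theory Num.Theory.
Import numFieldNormedType.Exports.
Local Open Scope classical_set_scope.
Local Open Scope ring_scope.

Section Defs.
Variables (R : realType) (X : normedModType R).

Definition opnorm (l : X -> R) : R :=
  sup [set `|l x| | x in [set x : X | `|x| <= 1]].

Definition rnorm (m : nat) (v : 'I_m -> R) : R :=
  Num.sqrt (m%:R^-1 * \sum_(j < m) `|v j| ^+ 2).

Definition lamdiff (m : nat) (lam : 'I_m -> X -> R) (g : X) (w : 'I_m -> R) :
  'I_m -> R := fun j => lam j g - w j.

Definition distX (g : X) (K : set X) : R := inf [set `|g - h| | h in K].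

Definition distS (A B : set X) : R := sup [set distX a B | a in A].

Definition Kw (m : nat) (lam : 'I_m -> X -> R) (K : set X) (w : 'I_m -> R) :
  set X := [set h | K h /\ (forall j, lam j h = w j)].

Definition Kweps (m : nat) (lam : 'I_m -> X -> R) (K : set X) (w : 'I_m -> R)
  (eps : R) : set X := [set h | K h /\ rnorm (lamdiff lam h w) <= eps].

Definition cheb (S : set X) : R :=
  inf [set r : R | 0 <= r /\ exists z : X, forall x, S x -> `|x - z| <= r].

Definition lossK (m : nat) (lam : 'I_m -> X -> R) (K : set X) (w : 'I_m -> R)
  (g : X) : R := rnorm (lamdiff lam g w) + distX g K.

End Defs.

(* Since dist(K, Sigma) < delta, some g in Sigma has ||f - g|| < delta.  The
   functionals lambda_j are 1-Lipschitz and f lies in K_w, so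
   L(fhat) <= L(g) <= 2 ||f - g|| < 2 delta.  A near-best approximation h of fhat
   in K satisfies ||lambda(h) - w|| <= L(fhat) + ||fhat - h|| - dist(fhat, K),
   which puts h, like f, in K(w, 4 delta); hence ||f - h|| <= 2 R(K(w, 4 delta))
   while ||h - fhat|| is essentially dist(fhat, K) <= 2 delta. *)

From HB Require Import structures.
From mathcomp Require Import all_boot all_order all_algebra.
From mathcomp Require Import all_classical all_reals all_analysis.
From mathcomp Require Import ring lra.
Set Implicit Arguments. Unset Strict Implicit. Unset Printing Implicit Defensive.
Import Order.TTheory GRing.Theory Num.Theory.
Import numFieldNormedType.Exports.
Local Open Scope classical_set_scope.
Local Open Scope ring_scope.

Lemma CauchySchwarz_sum (R : realDomainType) (m : nat) (a b : 'I_m -> R) :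
  (\sum_(j < m) a j * b j) ^+ 2 <=
    (\sum_(j < m) a j ^+ 2) * (\sum_(j < m) b j ^+ 2).
Proof.
set A := \sum_(j < m) a j ^+ 2; set B := \sum_(j < m) b j ^+ 2.
set S := \sum_(j < m) a j * b j.
have lagrange : \sum_(j < m) \sum_(k < m) (a j * b k - a k * b j) ^+ 2 =
    (A * B - S ^+ 2) *+ 2.
  have -> : (A * B - S ^+ 2) *+ 2 = A * B + B * A - (S * S) *+ 2.
    by rewrite mulrC; ring.
  rewrite !big_distrlr /= -sumrMnl -big_split -sumrB /=.
  apply: eq_bigr => j _; rewrite -sumrMnl -big_split -sumrB /=.
  by apply: eq_bigr => k _; ring.
rewrite -subr_ge0 -(pmulrn_lge0 _ (ltn0Sn 1)) -lagrange.
by apply: sumr_ge0 => j _; apply: sumr_ge0 => k _; exact: sqr_ge0.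
Qed.

Section MeanSquareNorm.
Variable R : realType.

Lemma rnorm_le (m : nat) (v : 'I_m -> R) (c : R) : 0 <= c ->
  (forall j, `|v j| <= c) -> rnorm v <= c.
Proof.
move=> c0 hv; rewrite /rnorm -[leRHS](ger0_norm c0) -sqrtr_sqr ler_sqrt ?sqr_ge0 //.
have hs : \sum_(j < m) `|v j| ^+ 2 <= c ^+ 2 *+ m.
  rewrite -[m in _ *+ m]card_ord -sumr_const; apply: ler_sum => j _.
  by rewrite lerXn2r ?nnegrE.
case: m v hv hs => [|m] v hv hs; first by rewrite invr0 mul0r sqr_ge0.
have m0 : (m.+1%:R : R) != 0 by rewrite pnatr_eq0.
rewrite -(mulKf m0 (c ^+ 2)) mulr_natl.
by rewrite ler_wpM2l // invr_ge0 ler0n.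
Qed.

Lemma rnormD (m : nat) (a b : 'I_m -> R) :
  rnorm (fun j => a j + b j) <= rnorm a + rnorm b.
Proof.
rewrite /rnorm; set A := \sum_(j < m) `|a j| ^+ 2; set B := \sum_(j < m) `|b j| ^+ 2.
have A0 : 0 <= A by apply: sumr_ge0 => j _; exact: sqr_ge0.
have B0 : 0 <= B by apply: sumr_ge0 => j _; exact: sqr_ge0.
have m0 : 0 <= (m%:R : R)^-1 by rewrite invr_ge0 ler0n.
have cs : \sum_(j < m) `|a j| * `|b j| <= Num.sqrt A * Num.sqrt B.
  have S0 : 0 <= \sum_(j < m) `|a j| * `|b j| by apply: sumr_ge0 => j _; exact: mulr_ge0.
  rewrite -sqrtrM // -(ger0_norm S0) -sqrtr_sqr ler_sqrt ?mulr_ge0 //.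
  exact: CauchySchwarz_sum.
have minkowski : \sum_(j < m) `|a j + b j| ^+ 2 <= (Num.sqrt A + Num.sqrt B) ^+ 2.
  apply: (@le_trans _ _ (\sum_(j < m) (`|a j| + `|b j|) ^+ 2)).
    by apply: ler_sum => j _; rewrite lerXn2r ?nnegrE ?addr_ge0 ?ler_normD.
  rewrite sqrrD !sqr_sqrtr //.
  under eq_bigr do rewrite sqrrD.
  by rewrite !big_split /= -mulr2n lerD2r lerD2l lerMn2r.
rewrite !(sqrtrM _ m0) -mulrDr ler_wpM2l ?sqrtr_ge0 //.
have AB0 := addr_ge0 (sqrtr_ge0 A) (sqrtr_ge0 B).
by rewrite -(ger0_norm AB0) -sqrtr_sqr ler_sqrt ?sqr_ge0.
Qed.

End MeanSquareNorm.

Section Distances.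
Variables (R : realType) (X : normedModType R).

Lemma distX_le (A : set X) (g h : X) : A h -> distX g A <= `|g - h|.
Proof.
move=> Ah; apply: ge_inf; last by exists h.
by exists 0 => _ [y _ <-].
Qed.

Lemma distX_lt (A : set X) (g : X) (r : R) : A !=set0 -> distX g A < r ->
  exists2 h, A h & `|g - h| < r.
Proof.
move=> [h0 Ah0] /inf_lt[|_ [h Ah <-] ghr]; last by exists h.
by exists `|g - h0|, h0.
Qed.

Lemma distX_le_distS (A B : set X) (M : R) (a : X) :
  (forall x, A x -> `|x| <= M) -> B !=set0 -> A a -> distX a B <= distS A B.
Proof.
move=> AM [b0 Bb0] Aa; apply: ub_le_sup; last by exists a.
exists (M + `|b0|) => _ [x Ax <-].
apply: (le_trans (distX_le x Bb0)); apply: (le_trans (ler_normB _ _)).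
by rewrite lerD2r AM.
Qed.

Lemma normB_le_cheb (S : set X) (M : R) (x y : X) :
  (forall z, S z -> `|z| <= M) -> S x -> S y -> `|x - y| <= 2 * cheb S.
Proof.
move=> SM Sx Sy.
set E := [set r : R | 0 <= r /\ exists z : X, forall x, S x -> `|x - z| <= r].
have hE : has_inf E.
  split; last by exists 0 => r [].
  exists (Num.max M 0); split; first by rewrite le_max lexx orbT.
  by exists 0 => u Su; rewrite subr0 le_max SM.
apply/ler_addgt0Pr => e e0.
have [r [_ [z hz]] hr] := inf_adherent (divr_gt0 e0 (ltr0n R 2)) hE.
have xyr : `|x - y| <= 2 * r.
  have -> : x - y = (x - z) - (y - z) by rewrite opprB addrA subrK.
  by rewrite (le_trans (ler_normB _ _)) // mulr2n mulrDl mul1r lerD ?hz.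
rewrite /cheb -/E; lra.
Qed.

End Distances.

Section OperatorNorm.
Variables (R : realType) (X : normedModType R) (l : {linear X -> R}).

(* [sup] of a set that is not bounded above is [0], so [opnorm l != 0] is what
   makes the supremum defining [opnorm l] genuine. *)
Lemma norm_le_opnorm (x : X) : opnorm l != 0 -> `|l x| <= opnorm l * `|x|.
Proof.
move=> op0.
have supE : has_sup [set `|l y| | y in [set y : X | `|y| <= 1]].
  by apply: contrapT => /sup_out E0; rewrite /opnorm E0 eqxx in op0.
have [->|x0] := eqVneq x 0; first by rewrite raddf0 !normr0 mulr0.
have nx : 0 < `|x| by rewrite normr_gt0.
have : `|l (`|x|^-1 *: x)| <= opnorm l.
  rewrite /opnorm; apply: sup_upper_bound => //; exists (`|x|^-1 *: x) => //=.
  by rewrite normrZ normfV normr_id mulVf ?gt_eqF.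
by rewrite linearZ_LR normrM normfV normr_id ler_pdivrMl // mulrC.
Qed.

Lemma opnorm_lipschitz (x y : X) : opnorm l != 0 ->
  `|l x - l y| <= opnorm l * `|x - y|.
Proof. by move=> op0; rewrite -raddfB norm_le_opnorm. Qed.

End OperatorNorm.

Section Loss.
Variables (R : realType) (X : normedModType R) (m : nat) (lam : 'I_m -> X -> R).
Hypothesis lam_lipschitz : forall j x y, `|lam j x - lam j y| <= `|x - y|.

Lemma rnorm_lamdiff_le (w : 'I_m -> R) (g g' : X) :
  rnorm (lamdiff lam g w) <= rnorm (lamdiff lam g' w) + `|g - g'|.
Proof.
have -> : lamdiff lam g w = (fun j => lamdiff lam g' w j + (lam j g - lam j g')).
  by apply/funext => j; rewrite /lamdiff [RHS]addrC subrKA.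
apply: (le_trans (rnormD _ _)); rewrite lerD2l.
exact: rnorm_le.
Qed.

Lemma lossK_le (K : set X) (f g : X) : K f ->
  lossK lam K (fun j => lam j f) g <= 2 * `|f - g|.
Proof.
move=> Kf; rewrite mulr2n mulrDl mul1r /lossK lerD //; last first.
  by rewrite distrC distX_le.
apply: (le_trans (@rnorm_lamdiff_le _ g f)); rewrite distrC -[leRHS]add0r lerD2r.
by apply: rnorm_le => // j; rewrite /lamdiff subrr normr0.
Qed.

Lemma Kweps_near_best (K : set X) (w : 'I_m -> R) (g h : X) (e : R) :
  K h -> `|g - h| <= distX g K + e -> Kweps lam K w (lossK lam K w g + e) h.
Proof.
move=> Kh ghe; split=> //.
apply: (le_trans (@rnorm_lamdiff_le _ h g)); rewrite /lossK -addrA lerD2l.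
by rewrite distrC.
Qed.

Lemma normB_le_of_lossK (K : set X) (M : R) (f g : X) (eta : R) :
  (forall x, K x -> `|x| <= M) -> K f -> 0 < eta ->
  lossK lam K (fun j => lam j f) g <= eta ->
  `|f - g| <= eta + 2 * cheb (Kweps lam K (fun j => lam j f) (2 * eta)).
Proof.
move=> KM Kf eta0 loss_eta; set w := fun j => lam j f.
set S := Kweps lam K w (2 * eta).
have SM z : S z -> `|z| <= M by move=> [Kz _]; exact: KM.
have Sf : S f.
  split=> //; apply: rnorm_le => [|j]; first by rewrite mulr_ge0 // ltW.
  by rewrite /lamdiff subrr normr0 mulr_ge0 // ltW.
apply/ler_addgt0Pr => e e0; set e' := Num.min e eta.
have e'0 : 0 < e' by rewrite lt_min e0 eta0.
have [h Kh gh] : exists2 h, K h & `|g - h| < distX g K + e'.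
  by apply: distX_lt; [exists f | rewrite ltrDl].
have Sh : S h.
  have [_ near_h] := Kweps_near_best w Kh (ltW gh).
  split=> //; apply: (le_trans near_h).
  by rewrite mulr2n mulrDl mul1r lerD // ge_min lexx orbT.
have dist_eta : distX g K <= eta.
  by apply: le_trans loss_eta; rewrite /lossK lerDr sqrtr_ge0.
have e'e : e' <= e by rewrite ge_min lexx.
have fhg : `|f - g| <= `|f - h| + `|h - g|.
  by rewrite -(subrKA h f) ler_normD.
have := normB_le_cheb SM Sf Sh; rewrite distrC in gh; lra.
Qed.

End Loss.

Theorem theorem3p4 (R : realType) (X : completeNormedModType R) (K : set X)
  (m : nat) (lam : 'I_m -> X -> R) (f : X) (C delta : R) (Sigma : set X)
  (fhat : X) :
  compact K ->
  (forall j (a : R) (x y : X), lam j (a *: x + y) = a * lam j x + lam j y) ->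
  (forall j, continuous (lam j)) ->
  (forall j, opnorm (lam j) = 1) ->
  K f ->
  cheb (Kw lam K (fun j => lam j f)) != 0 ->
  2 < C -> 0 < delta ->
  2 * delta + 2 * cheb (Kweps lam K (fun j => lam j f) (4 * delta))
    <= C * cheb (Kw lam K (fun j => lam j f)) ->
  distS K Sigma < delta ->
  Sigma fhat ->
  (forall g, Sigma g ->
     lossK lam K (fun j => lam j f) fhat <= lossK lam K (fun j => lam j f) g) ->
  `|f - fhat| <= C * cheb (Kw lam K (fun j => lam j f)).
Proof.
move=> cK lin _ op1 Kf _ _ delta0 hdelta dKSigma Sigma_fhat fhat_min.
have [M _ KM] := pinfty_ex_gt0 (compact_bounded cK).
have lam_lip j x y : `|lam j x - lam j y| <= `|x - y|.
  pose l : {linear X -> R} := HB.pack (lam j) (GRing.isLinear.Build _ _ _ _ _ (lin j)).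
  have := @opnorm_lipschitz _ _ l x y.
  by rewrite /= op1 mul1r oner_neq0; apply.
have [g Sigma_g fg] : exists2 g, Sigma g & `|f - g| < delta.
  have Sigma0 : Sigma !=set0 by exists fhat.
  exact/(distX_lt Sigma0)/(le_lt_trans (distX_le_distS KM Sigma0 Kf)).
have loss_fhat : lossK lam K (fun j => lam j f) fhat <= 2 * delta.
  apply: (le_trans (fhat_min g Sigma_g)); apply: (le_trans (lossK_le lam_lip g Kf)).
  by rewrite ler_pM2l // ltW.
apply: le_trans hdelta; rewrite -[4]/(2 * 2)%:R natrM -mulrA.
apply: (normB_le_of_lossK lam_lip KM Kf) loss_fhat; exact: mulr_gt0.
Qed.
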